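(* Let $L$ be a Leibniz algebra over $F$, $(l,r,V)$ a representation of $L$, $A$ a subspace of $L$ and $x\in n_L(A)$. Then for all integers $k,p\ge 0$: $$\big((r_A)^p r_x^k\big)\circ r_A\subseteq (r_A)^{p+1}r_x^k+\cdots+(r_A)^{p+1}r_x+(r_A)^{p+1}.$$
   Context: $F$ is an algebraically closed field of characteristic zero; all spaces are finite-dimensional. A (right) Leibniz algebra is a vector space $L$ with bilinear bracket satisfying $[x,[y,z]]=[[x,y],z]-[[x,z],y]$. A representation $(l,r,V)$ of $L$ is a vector space $V$ with linear maps $l,r:L\to\mathrm{End}_F(V)$ such that $r_{[x,y]}=r_yr_x-r_xr_y$, $l_{[x,y]}=r_yl_x-l_xr_y$, $l_{[x,y]}=r_yl_x+l_xl_y$ (products are compositions). For a subspace $A\subseteq L$, $r_A=\{r_a:a\in A\}$; $(r_A)^p$ is the span of all compositions $r_{a_1}\cdots r_{a_p}$, $a_i\in A$ ($(r_A)^0=F\,\mathrm{id}_V$); for subspaces $U,W$ of $\mathrm{End}_F(V)$, $UW$ (or $U\circ W$) is the span of all compositions $uw$; $(r_A)^p r_x^j$ is the span of $\{u\, r_x^j : u\in (r_A)^p\}$, $r_x^0=\mathrm{id}_V$; $+$ denotes sum of subspaces. $n_L(A)=\{y\in L:[y,a]\in A\text{ and }[a,y]\in A\ \forall a\in A\}$. *)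

From HB Require Import structures.
From mathcomp Require Import all_boot all_order all_algebra.
Set Implicit Arguments. Unset Strict Implicit. Unset Printing Implicit Defensive.
Import GRing.Theory.
Local Open Scope ring_scope.


Section Leibniz.
Variable F : fieldType.

Definition bilinear_br (L : vectType F) (br : L -> L -> L) :=
  (forall (a : F) (x y z : L), br (a *: x + y) z = a *: br x z + br y z) /\
  (forall (a : F) (x y z : L), br z (a *: x + y) = a *: br z x + br z y).

Definition leibniz_identity (L : vectType F) (br : L -> L -> L) :=
  forall x y z : L, br x (br y z) = br (br x y) z - br (br x z) y.

Definition leibniz_algebra (L : vectType F) (br : L -> L -> L) :=
  bilinear_br br /\ leibniz_identity br.

Definition linear_map (L W : vectType F) (f : L -> W) :=
  forall (a : F) (x y : L), f (a *: x + y) = a *: f x + f y.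

(* representation (l, r, V); products are compositions, (f \o g) v = f (g v) *)
Definition representation (L V : vectType F) (br : L -> L -> L)
    (l r : L -> 'End(V)) :=
  [/\ linear_map l, linear_map r,
      (forall x y, r (br x y) = (r y \o r x)%VF - (r x \o r y)%VF),
      (forall x y, l (br x y) = (r y \o l x)%VF - (l x \o r y)%VF) &
      (forall x y, l (br x y) = (r y \o l x)%VF + (l x \o l y)%VF)].

Definition idealiser (L : vectType F) (br : L -> L -> L) (A : {vspace L}) (y : L) :=
  forall a, a \in A -> br y a \in A /\ br a y \in A.

(* Subsets / subspaces of End(V) are represented as predicates *)
Definition spanE (V : vectType F) (S : 'End(V) -> Prop) : 'End(V) -> Prop :=
  fun f => exists s : seq 'End(V), (forall g, g \in s -> S g) /\ f \in <<s>>%VS.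

Definition rset (L V : vectType F) (r : L -> 'End(V)) (A : {vspace L})
  : 'End(V) -> Prop := fun f => exists2 a, a \in A & f = r a.

Fixpoint comps (V : vectType F) (S : 'End(V) -> Prop) (p : nat) : 'End(V) -> Prop :=
  match p with
  | 0 => fun f => f = \1%VF
  | p'.+1 => fun f => exists g h, S g /\ comps S p' h /\ f = (g \o h)%VF
  end.

Definition powsp (V : vectType F) (S : 'End(V) -> Prop) (p : nat) :=
  spanE (comps S p).

Definition prodsp (V : vectType F) (U W : 'End(V) -> Prop) :=
  spanE (fun f => exists u w, U u /\ W w /\ f = (u \o w)%VF).

Definition iterE (V : vectType F) (g : 'End(V)) (j : nat) : 'End(V) :=
  iter j (fun h => (g \o h)%VF) \1%VF.

Definition rmulsp (V : vectType F) (U : 'End(V) -> Prop) (g : 'End(V)) :=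
  spanE (fun f => exists2 u, U u & f = (u \o g)%VF).

Definition addsp (V : vectType F) (U W : 'End(V) -> Prop) : 'End(V) -> Prop :=
  fun f => exists u w, U u /\ W w /\ f = u + w.

Definition subsp (V : vectType F) (U W : 'End(V) -> Prop) :=
  forall f, U f -> W f.

Fixpoint sum_rmul (V : vectType F) (U : 'End(V) -> Prop) (g : 'End(V)) (k : nat)
  : 'End(V) -> Prop :=
  match k with
  | 0 => rmulsp U (iterE g 0)
  | k'.+1 => addsp (rmulsp U (iterE g k'.+1)) (sum_rmul U g k')
  end.

End Leibniz.

(* Since r is a representation, r_{[a,x]} = r_x r_a - r_a r_x, so r_x r_a = r_a r_x + r_{[a,x]}
   with [a,x] in A because x normalises A.  Pushing r_a to the left through r_x^k one factor at a
   time gives r_x^k r_a in r_A r_x^k + ... + r_A r_x + r_A; multiplying on the left by an element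
   of (r_A)^p and taking spans yields the inclusion. *)

From HB Require Import structures.
From mathcomp Require Import all_boot all_order all_algebra.
Set Implicit Arguments. Unset Strict Implicit. Unset Printing Implicit Defensive.
Import GRing.Theory.
Local Open Scope ring_scope.

Section ClosedPredicates.
Variables (F : fieldType) (V : vectType F).
Implicit Types (C S U W : 'End(V) -> Prop).

Definition lin_closed C := C 0 /\ (forall (a : F) u v, C u -> C v -> C (a *: u + v)).

Lemma lin_closedD C u v : lin_closed C -> C u -> C v -> C (u + v).
Proof. by move=> [_ CZD] Cu Cv; rewrite -(scale1r u); apply: CZD. Qed.

Lemma lin_closed_sum C (I : Type) (s : seq I) (P : pred I) (f : I -> 'End(V)) :
  lin_closed C -> (forall i, P i -> C (f i)) -> C (\sum_(i <- s | P i) f i).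
Proof.
move=> hC Cf; apply: (big_ind C) => //; first exact: hC.1.
by move=> u v; apply: lin_closedD.
Qed.

Lemma lin_closed_compr C w : lin_closed C -> lin_closed (fun f => C (f \o w)%VF).
Proof.
move=> [C0 CZD]; split; first by rewrite comp_lfun0l.
by move=> a u v Cu Cv; rewrite comp_lfunDl -comp_lfunZl; apply: CZD.
Qed.

Lemma spanE_lin_closed S : lin_closed (spanE S).
Proof.
split; first by exists [::]; split => //; exact: mem0v.
move=> a u v [s1 [S1 u_s1]] [s2 [S2 v_s2]]; exists (s1 ++ s2); split.
  by move=> g; rewrite mem_cat => /orP[]; [apply: S1 | apply: S2].
by rewrite span_cat memv_add ?memvZ.
Qed.

Lemma spanE_sub S : subsp S (spanE S).
Proof.
move=> f Sf; exists [:: f]; split; last exact: memv_span1.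
by move=> g; rewrite inE => /eqP ->.
Qed.

Lemma spanE_min C S : lin_closed C -> subsp S C -> subsp (spanE S) C.
Proof.
move=> hC SC f [s [sS]]; elim: s f sS => [|g s IHs] f sS.
  by rewrite span_nil memv0 => /eqP ->; exact: hC.1.
rewrite span_cons => /memv_addP[_ /vlineP[a ->] [h h_s ->]].
apply: hC.2; first by apply/SC/sS; rewrite mem_head.
by apply: IHs h_s => g' g's; apply: sS; rewrite in_cons g's orbT.
Qed.

Lemma addsp_lin_closed U W : lin_closed U -> lin_closed W -> lin_closed (addsp U W).
Proof.
move=> [U0 UZD] [W0 WZD]; split; first by exists 0, 0; rewrite addr0.
move=> a _ _ [u1 [w1 [U1 [W1 ->]]]] [u2 [w2 [U2 [W2 ->]]]].
exists (a *: u1 + u2), (a *: w1 + w2); split; first exact: UZD.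
by split; [exact: WZD | rewrite scalerDr addrACA].
Qed.

Lemma sum_rmul_lin_closed U g k : lin_closed (sum_rmul U g k).
Proof.
elim: k => [|k IHk] /=; first exact: spanE_lin_closed.
exact: addsp_lin_closed (spanE_lin_closed _) IHk.
Qed.

Lemma sum_rmul_sub U g k j : (j <= k)%N -> subsp (rmulsp U (iterE g j)) (sum_rmul U g k).
Proof.
elim: k => [|k IHk] /=; first by rewrite leqn0 => /eqP ->.
rewrite leq_eqVlt => /orP[/eqP -> | ltjk] f Uf.
  by exists f, 0; rewrite addr0; split=> //; split=> //; exact: (sum_rmul_lin_closed U g k).1.
exists 0, f; rewrite add0r; split; first exact: (spanE_lin_closed _).1.
by split=> //; exact: IHk.
Qed.

Lemma comps_rcons S p h g : comps S p h -> S g -> comps S p.+1 (h \o g)%VF.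
Proof.
elim: p h => [|p IHp] h /=.
  by move=> -> Sg; exists g, \1%VF; rewrite comp_lfun1l comp_lfun1r.
move=> [g1 [h1 [Sg1 [h1_p ->]]]] Sg; exists g1, (h1 \o g)%VF.
by split; last split; [| exact: IHp | rewrite comp_lfunA].
Qed.

Lemma iterES (g : 'End(V)) k : iterE g k.+1 = (iterE g k \o g)%VF.
Proof.
elim: k => [|k IHk]; first by rewrite /iterE /= comp_lfun1l comp_lfun1r.
by rewrite -[LHS]/(g \o iterE g k.+1)%VF {1}IHk comp_lfunA.
Qed.

Lemma comp_lfun_suml (I : Type) (s : seq I) (P : pred I) (G : I -> 'End(V)) (h : 'End(V)) :
  ((\sum_(i <- s | P i) G i) \o h)%VF = \sum_(i <- s | P i) (G i \o h)%VF.
Proof. exact: (big_morph (fun f => f \o h)%VF (fun _ _ => comp_lfunDl _ _ _) (comp_lfun0l _ h)). Qed.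

Lemma comp_lfun_sumr (I : Type) (s : seq I) (P : pred I) (G : I -> 'End(V)) (h : 'End(V)) :
  (h \o \sum_(i <- s | P i) G i)%VF = \sum_(i <- s | P i) (h \o G i)%VF.
Proof. exact: (big_morph (comp_lfun h) (comp_lfunDr h) (comp_lfun0r _ h)). Qed.

End ClosedPredicates.

Section LinearMap.
Variables (F : fieldType) (L W : vectType F) (f : L -> W).
Hypothesis f_lin : linear_map f.

Lemma linear_mapD u v : f (u + v) = f u + f v.
Proof. by have := f_lin 1 u v; rewrite !scale1r. Qed.

Lemma linear_map0 : f 0 = 0.
Proof. by apply: (@addIr _ (f 0)); rewrite -linear_mapD !add0r. Qed.

End LinearMap.

Section RepresentationNormaliser.
Variables (F : fieldType) (L V : vectType F) (br : L -> L -> L) (l r : L -> 'End(V)).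
Hypothesis r_rep : representation br l r.
Variables (A : {vspace L}) (x : L).
Hypothesis x_norm : idealiser br A x.

Let r_lin : linear_map r. Proof. by case: r_rep. Qed.

Definition rA_rx k (f : 'End(V)) := exists c : nat -> L,
  (forall j, c j \in A) /\ f = \sum_(j < k.+1) (r (c j) \o iterE (r x) j)%VF.

Lemma rA_rxD k f1 f2 : rA_rx k f1 -> rA_rx k f2 -> rA_rx k (f1 + f2).
Proof.
move=> [c1 [Ac1 ->]] [c2 [Ac2 ->]]; exists (fun j => c1 j + c2 j); split.
  by move=> j; apply: memvD.
by rewrite -big_split; apply: eq_bigr => j _; rewrite linear_mapD // comp_lfunDl.
Qed.

Lemma rA_rxS k f : rA_rx k f -> rA_rx k.+1 f.
Proof.
move=> [c [Ac ->]]; exists (fun j => if (j <= k)%N then c j else 0); split.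
  by move=> j; case: ifP => _; [apply: Ac | apply: mem0v].
rewrite [RHS]big_ord_recr /= ltnn linear_map0 // comp_lfun0l addr0.
by apply: eq_bigr => j _; rewrite -ltnS ltn_ord.
Qed.

Lemma rA_rx_compr k f : rA_rx k f -> rA_rx k.+1 (f \o r x)%VF.
Proof.
move=> [c [Ac ->]]; exists (fun j => if j is j'.+1 then c j' else 0); split.
  by case=> [|j]; [apply: mem0v | apply: Ac].
rewrite [RHS]big_ord_recl /= linear_map0 // comp_lfun0l add0r.
rewrite comp_lfun_suml; apply: eq_bigr => j _.
by rewrite add0n -[(r x \o _)%VF]/(iterE (r x) j.+1) iterES comp_lfunA.
Qed.

Lemma rx_comm_rA a : a \in A -> (r x \o r a = r a \o r x + r (br a x))%VF.
Proof. by case: r_rep => _ _ r_br _ _; rewrite r_br addrC subrK. Qed.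

Lemma iterE_comp_rA k a : a \in A -> rA_rx k (iterE (r x) k \o r a)%VF.
Proof.
elim: k a => [|k IHk] a aA.
  by exists (fun=> a); split=> //; rewrite big_ord1 /iterE /= comp_lfun1l comp_lfun1r.
rewrite iterES -comp_lfunA rx_comm_rA // comp_lfunDr comp_lfunA.
apply: rA_rxD; first exact/rA_rx_compr/IHk.
by apply/rA_rxS/IHk; case: (x_norm aA).
Qed.

Lemma comps_iterE_rA k p h a : comps (rset r A) p h -> a \in A ->
  sum_rmul (powsp (rset r A) p.+1) (r x) k (h \o iterE (r x) k \o r a)%VF.
Proof.
move=> h_p aA; rewrite -comp_lfunA.
have [c [Ac ->]] := iterE_comp_rA k aA; rewrite comp_lfun_sumr.
apply: lin_closed_sum; first exact: sum_rmul_lin_closed.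
move=> j _; rewrite comp_lfunA; apply: (@sum_rmul_sub _ _ _ _ _ j); first by rewrite -ltnS ltn_ord.
apply/spanE_sub; exists (h \o r (c j))%VF => //.
by apply/spanE_sub/comps_rcons => //; exists (c j).
Qed.

End RepresentationNormaliser.

Theorem lemma2p12 (F : closedFieldType) (charF0 : [pchar F] =i pred0)
  (L : vectType F) (br : L -> L -> L) (HL : leibniz_algebra br)
  (V : vectType F) (l r : L -> 'End(V)) (Hrep : representation br l r)
  (A : {vspace L}) (x : L) (Hx : idealiser br A x) :
  forall k p : nat,
    subsp (prodsp (rmulsp (powsp (rset r A) p) (iterE (r x) k)) (rset r A))
          (sum_rmul (powsp (rset r A) p.+1) (r x) k).
Proof.
move=> k p; apply: spanE_min; first exact: sum_rmul_lin_closed.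
move=> _ [u [_ [u_span [[a aA ->] ->]]]].
apply: (spanE_min (lin_closed_compr _ (sum_rmul_lin_closed _ _ _)) _ u_span).
move=> _ [v v_span ->].
apply: (spanE_min (lin_closed_compr _ (lin_closed_compr _ (sum_rmul_lin_closed _ _ _))) _ v_span).
by move=> h h_p; exact: (comps_iterE_rA Hrep Hx).
Qed.
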